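(* Let $(\mathcal{A},\cdot,\alpha)$ be a commutative Hom-associative algebra with a derivation $D$ such that $\alpha D=D\alpha$, and let $\lambda\in\mathbb{C}$ be fixed. Define $x\circ y=x\cdot D(y)+\lambda\, x\cdot y$ and $[x,y]^-=x\cdot D(y)-y\cdot D(x)$ for $x,y\in\mathcal{A}$. Then $(\mathcal{A},[\cdot,\cdot]^-,\circ,\alpha)$ is a Hom Gel'fand-Dorfman bialgebra.
   Context: All vector spaces are over $\mathbb{C}$. A Hom-associative algebra is a vector space $\mathcal{A}$ with a bilinear map $\cdot$ and linear map $\alpha$ such that $\alpha(x)\cdot(y\cdot z)=(x\cdot y)\cdot\alpha(z)$ for all $x,y,z$; it is commutative if $x\cdot y=y\cdot x$. A derivation is a linear map $D$ with $D(x\cdot y)=D(x)\cdot y+x\cdot D(y)$. A Hom-Novikov algebra is a vector space with a bilinear operation $\circ$ and a linear endomorphism $\alpha$ such that $(x\circ y)\circ\alpha(z)-\alpha(x)\circ(y\circ z)=(y\circ x)\circ\alpha(z)-\alpha(y)\circ(x\circ z)$ and $(x\circ y)\circ\alpha(z)=(x\circ z)\circ\alpha(y)$. A Hom-Lie algebra is a vector space with a bilinear map $[\cdot,\cdot]$ and linear map $\alpha$ with $[x,y]=-[y,x]$ and $[[x,y],\alpha(z)]+[[y,z],\alpha(x)]+[[z,x],\alpha(y)]=0$. A Hom Gel'fand-Dorfman bialgebra is a vector space $\mathcal{A}$ with a linear endomorphism $\alpha$ and two bilinear operations $[\cdot,\cdot],\circ$ such that $(\mathcal{A},[\cdot,\cdot],\alpha)$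 is a Hom-Lie algebra, $(\mathcal{A},\circ,\alpha)$ is a Hom-Novikov algebra, and $[x\circ y,\alpha(z)]-[x\circ z,\alpha(y)]+[x,y]\circ\alpha(z)-[x,z]\circ\alpha(y)-\alpha(x)\circ[y,z]=0$ for all $x,y,z$. *)

From HB Require Import structures.
From mathcomp Require Import all_boot all_order all_algebra.
From mathcomp Require Import complex.
From mathcomp Require Import reals.
Set Implicit Arguments. Unset Strict Implicit. Unset Printing Implicit Defensive.
Import GRing.Theory.
Local Open Scope ring_scope.

Section HomDefs.
Variables (K : nzRingType) (V : lmodType K).

Definition bilinear_op (m : V -> V -> V) : Prop :=
  (forall a x y z, m (a *: x + y) z = a *: m x z + m y z) /\
  (forall a x y z, m x (a *: y + z) = a *: m x y + m x z).

Definition linear_map (f : V -> V) : Prop :=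
  forall a x y, f (a *: x + y) = a *: f x + f y.

Definition hom_associative (m : V -> V -> V) (al : V -> V) : Prop :=
  forall x y z, m (al x) (m y z) = m (m x y) (al z).

Definition commutative_op (m : V -> V -> V) : Prop :=
  forall x y, m x y = m y x.

Definition derivation (m : V -> V -> V) (D : V -> V) : Prop :=
  linear_map D /\ forall x y, D (m x y) = m (D x) y + m x (D y).

Definition is_hom_assoc_algebra (m : V -> V -> V) (al : V -> V) : Prop :=
  bilinear_op m /\ linear_map al /\ hom_associative m al.

Definition is_hom_novikov (o : V -> V -> V) (al : V -> V) : Prop :=
  bilinear_op o /\ linear_map al /\
  (forall x y z, o (o x y) (al z) - o (al x) (o y z)
                 = o (o y x) (al z) - o (al y) (o x z)) /\
  (forall x y z, o (o x y) (al z) = o (o x z) (al y)).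

Definition is_hom_lie (br : V -> V -> V) (al : V -> V) : Prop :=
  bilinear_op br /\ linear_map al /\
  (forall x y, br x y = - br y x) /\
  (forall x y z, br (br x y) (al z) + br (br y z) (al x) + br (br z x) (al y) = 0).

Definition is_hom_GD_bialgebra (br o : V -> V -> V) (al : V -> V) : Prop :=
  is_hom_lie br al /\ is_hom_novikov o al /\
  (forall x y z, br (o x y) (al z) - br (o x z) (al y) + o (br x y) (al z)
                 - o (br x z) (al y) - o (al x) (br y z) = 0).

End HomDefs.

(** Every term occurring in the axioms of a Hom Gel'fand-Dorfman bialgebra
  expands, after the Leibniz rule and [al D = D al], into a linear combination
  of products [al u · (v · w)] with [u, v, w] iterated derivatives of [x, y, z].
  In a commutative Hom-associative algebra this product is totally symmetric in
  [u, v, w], so each axiom reduces to an identity between formal linear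
  combinations of sorted triples.  Such identities are decided by [ring] after
  embedding the module into its square-zero extension [K ⋉ V], a commutative
  ring in which the triples become atoms. *)

From HB Require Import structures.
From mathcomp Require Import all_boot all_order all_algebra ring.
From mathcomp Require Import complex reals.
Import GRing.Theory.
Local Open Scope ring_scope.

Section LinearMap.
Variables (K : nzRingType) (V : lmodType K) (f : V -> V).
Hypothesis f_lin : linear_map f.

Lemma linear_map0 : f 0 = 0.
Proof.
have := f_lin 1 0 0; rewrite !scale1r addr0 => f00.
by apply: (@addrI _ (f 0)); rewrite addr0 -f00.
Qed.

Lemma linear_mapD x y : f (x + y) = f x + f y.
Proof. by rewrite -{1}[x]scale1r f_lin scale1r. Qed.

Lemma linear_mapZ a x : f (a *: x) = a *: f x.
Proof. by rewrite -[a *: x]addr0 f_lin linear_map0 addr0. Qed.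

Lemma linear_mapN x : f (- x) = - f x.
Proof. by rewrite -scaleN1r linear_mapZ scaleN1r. Qed.

End LinearMap.

Section SquareZeroExtension.
Variables (K : comNzRingType) (V : lmodType K).

Definition sqz := (K * V)%type.
HB.instance Definition _ := GRing.Zmodule.on sqz.

Definition sqz_one : sqz := (1, 0).
Definition sqz_mul (p q : sqz) : sqz := (p.1 * q.1, p.1 *: q.2 + q.1 *: p.2).

Lemma sqz_mulA : associative sqz_mul.
Proof.
move=> [a u] [b v] [c w]; rewrite /sqz_mul /=; congr pair; first by rewrite mulrA.
by rewrite !scalerDr !scalerA !addrA mulrC [c * a]mulrC [c * b]mulrC [b * a]mulrC addrAC.
Qed.

Lemma sqz_mulC : commutative sqz_mul.
Proof. by move=> [a u] [b v]; rewrite /sqz_mul /= mulrC addrC. Qed.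

Lemma sqz_mul1 : left_id sqz_one sqz_mul.
Proof. by move=> [a u]; rewrite /sqz_mul /= mul1r scale1r scaler0 addr0. Qed.

Lemma sqz_mulDl : left_distributive sqz_mul +%R.
Proof.
move=> [a u] [b v] [c w]; rewrite /sqz_mul /=; congr pair; first by rewrite mulrDl.
by rewrite scalerDl scalerDr addrACA.
Qed.

Lemma sqz_one_neq0 : sqz_one != 0.
Proof. by apply/eqP => -[]; apply/eqP; exact: oner_neq0. Qed.

HB.instance Definition _ := GRing.Zmodule_isComNzRing.Build sqz
  sqz_mulA sqz_mulC sqz_mul1 sqz_mulDl sqz_one_neq0.

Definition sqz_vec (v : V) : sqz := (0, v).
Definition sqz_scal (a : K) : sqz := (a, 0).

Lemma sqz_vec0 : sqz_vec 0 = 0. Proof. by []. Qed.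

Lemma sqz_vecD u v : sqz_vec (u + v) = sqz_vec u + sqz_vec v.
Proof. by rewrite /sqz_vec; congr pair; rewrite addr0. Qed.

Lemma sqz_vecN u : sqz_vec (- u) = - sqz_vec u.
Proof. by rewrite /sqz_vec; congr pair; rewrite oppr0. Qed.

Lemma sqz_vecZ a u : sqz_vec (a *: u) = sqz_scal a * sqz_vec u.
Proof. by rewrite /sqz_vec /sqz_scal /= /GRing.mul /= /sqz_mul /= mulr0 scale0r addr0. Qed.

Lemma sqz_vec_inj : injective sqz_vec.
Proof. by move=> u v []. Qed.

End SquareZeroExtension.

Section HomGDFromDerivation.
Variables (K : comNzRingType) (V : lmodType K).
Variables (mul : V -> V -> V) (al D : V -> V) (lam : K).
Hypotheses (mul_homA : is_hom_assoc_algebra mul al) (mulC : commutative_op mul).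
Hypotheses (D_der : derivation mul D) (al_D : forall x, al (D x) = D (al x)).

Definition der_bracket x y := mul x (D y) - mul y (D x).
Definition der_circ x y := mul x (D y) + lam *: mul x y.

Lemma al_linear : linear_map al. Proof. by case: mul_homA => _ []. Qed.

Lemma mul_linear_left z : linear_map (mul^~ z).
Proof. by case: mul_homA => -[mul_l _] _ a x y; apply: mul_l. Qed.

Lemma mul_linear_right z : linear_map (mul z).
Proof. by case: mul_homA => -[_ mul_r] _ a x y; apply: mul_r. Qed.

Lemma mulDl x y z : mul (x + y) z = mul x z + mul y z.
Proof. exact: linear_mapD (mul_linear_left z) _ _. Qed.
Lemma mulDr x y z : mul z (x + y) = mul z x + mul z y.
Proof. exact: linear_mapD (mul_linear_right z) _ _. Qed.
Lemma mulNl x z : mul (- x) z = - mul x z.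
Proof. exact: linear_mapN (mul_linear_left z) _. Qed.
Lemma mulNr x z : mul z (- x) = - mul z x.
Proof. exact: linear_mapN (mul_linear_right z) _. Qed.
Lemma mulZl a x z : mul (a *: x) z = a *: mul x z.
Proof. exact: linear_mapZ (mul_linear_left z) _ _. Qed.
Lemma mulZr a x z : mul z (a *: x) = a *: mul z x.
Proof. exact: linear_mapZ (mul_linear_right z) _ _. Qed.

Lemma derD x y : D (x + y) = D x + D y.
Proof. by case: D_der => D_lin _; exact: linear_mapD. Qed.
Lemma derN x : D (- x) = - D x.
Proof. by case: D_der => D_lin _; exact: linear_mapN. Qed.
Lemma derZ a x : D (a *: x) = a *: D x.
Proof. by case: D_der => D_lin _; exact: linear_mapZ. Qed.
Lemma der_mul x y : D (mul x y) = mul (D x) y + mul x (D y).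
Proof. by case: D_der. Qed.
Lemma der_al x : D (al x) = al (D x).
Proof. by rewrite al_D. Qed.

Definition hom_triple a b c := mul (al a) (mul b c).

Lemma hom_tripleE a b c : mul (al a) (mul b c) = hom_triple a b c.
Proof. by []. Qed.

Lemma hom_tripleEr a b c : mul (mul b c) (al a) = hom_triple a b c.
Proof. by rewrite /hom_triple mulC. Qed.

Lemma hom_triple_swap23 a b c : hom_triple a b c = hom_triple a c b.
Proof. by rewrite /hom_triple (mulC b). Qed.

Lemma hom_triple_swap12 a b c : hom_triple a b c = hom_triple b a c.
Proof. by case: mul_homA => _ [_ homA]; rewrite /hom_triple homA (mulC a) -homA mulC. Qed.

Ltac expand :=
  rewrite ?(mulDl, mulDr, mulNl, mulNr, mulZl, mulZr,
            derD, derN, derZ, der_mul, der_al);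
  rewrite ?(hom_tripleE, hom_tripleEr).

Ltac rank x y z e :=
  lazymatch e with
  | D ?e' => let r := rank x y z e' in constr:((3 + r)%nat)
  | x => constr:(0%nat) | y => constr:(1%nat) | z => constr:(2%nat)
  end.

Ltac sort_triples x y z :=
  repeat match goal with
  |- context [hom_triple ?a ?b ?c] =>
    let ra := rank x y z a in let rb := rank x y z b in let rc := rank x y z c in
    first [ lazymatch eval compute in (Nat.ltb rb ra) with
            | true => rewrite (hom_triple_swap12 a b c) end
          | lazymatch eval compute in (Nat.ltb rc rb) with
            | true => rewrite (hom_triple_swap23 a b c) end ]
  end.

Ltac compare_coefficients :=
  apply: sqz_vec_inj; rewrite ?(sqz_vecD, sqz_vecN, sqz_vecZ, sqz_vec0); ring.

Lemma der_bracket_bilinear : bilinear_op der_bracket.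
Proof. by split=> a x y z; rewrite /der_bracket; expand; compare_coefficients. Qed.

Lemma der_bracket_skew x y : der_bracket x y = - der_bracket y x.
Proof. by rewrite /der_bracket opprB. Qed.

Lemma der_bracket_hom_jacobi x y z :
  der_bracket (der_bracket x y) (al z) + der_bracket (der_bracket y z) (al x)
    + der_bracket (der_bracket z x) (al y) = 0.
Proof. rewrite /der_bracket; expand; sort_triples x y z; compare_coefficients. Qed.

Lemma der_bracket_hom_lie : is_hom_lie der_bracket al.
Proof.
split; first exact: der_bracket_bilinear.
split; first exact: al_linear.
by split; [exact: der_bracket_skew | exact: der_bracket_hom_jacobi].
Qed.

Lemma der_circ_bilinear : bilinear_op der_circ.
Proof. by split=> a x y z; rewrite /der_circ; expand; compare_coefficients. Qed.

Lemma der_circ_left_symmetric x y z :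
  der_circ (der_circ x y) (al z) - der_circ (al x) (der_circ y z)
  = der_circ (der_circ y x) (al z) - der_circ (al y) (der_circ x z).
Proof. rewrite /der_circ; expand; sort_triples x y z; compare_coefficients. Qed.

Lemma der_circ_right_commutative x y z :
  der_circ (der_circ x y) (al z) = der_circ (der_circ x z) (al y).
Proof. rewrite /der_circ; expand; sort_triples x y z; compare_coefficients. Qed.

Lemma der_circ_hom_novikov : is_hom_novikov der_circ al.
Proof.
split; first exact: der_circ_bilinear.
split; first exact: al_linear.
by split; [exact: der_circ_left_symmetric | exact: der_circ_right_commutative].
Qed.

Lemma der_bracket_circ_compatible x y z :
  der_bracket (der_circ x y) (al z) - der_bracket (der_circ x z) (al y)
  + der_circ (der_bracket x y) (al z) - der_circ (der_bracket x z) (al y)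
  - der_circ (al x) (der_bracket y z) = 0.
Proof.
rewrite /der_bracket /der_circ; expand; sort_triples x y z; compare_coefficients.
Qed.

Lemma der_hom_GD_bialgebra : is_hom_GD_bialgebra der_bracket der_circ al.
Proof.
split; first exact: der_bracket_hom_lie.
by split; [exact: der_circ_hom_novikov | exact: der_bracket_circ_compatible].
Qed.

End HomGDFromDerivation.

Local Open Scope complex_scope.

Theorem theorem3p8 (R : realType) (V : lmodType R[i])
    (mul : V -> V -> V) (al D : V -> V) (lam : R[i]) :
  is_hom_assoc_algebra mul al ->
  commutative_op mul ->
  derivation mul D ->
  (forall x, al (D x) = D (al x)) ->
  is_hom_GD_bialgebra
    (fun x y => mul x (D y) - mul y (D x))
    (fun x y => mul x (D y) + lam *: mul x y)
    al.
Proof.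
move=> mul_homA mulC D_der al_D.
exact: (@der_hom_GD_bialgebra _ _ mul al D lam mul_homA mulC D_der al_D).
Qed.
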